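(* Let $(\mathcal{A},\mathbf{m})$ be a multiarrangement in $\mathbb{Q}^l$ with $\mathcal{A}=\{H_1,\dots,H_n\}$, $H_i=\alpha_i^{-1}(0)$, where the $\alpha_i\in S_\mathbb{Z}=\mathbb{Z}[x_1,\dots,x_l]$ are linear forms such that no prime number divides any $\alpha_i$. Then $D(\mathcal{A},\mathbf{m})\cong\operatorname{Ker}(\varphi_\mathbb{Z})\otimes_\mathbb{Z}\mathbb{Q}$.
   Context: $S=\mathbb{Q}[x_1,\dots,x_l]$, $\mathbf{m}\colon\mathcal{A}\to\mathbb{Z}_{\ge0}$, and $D(\mathcal{A},\mathbf{m})=\{\delta=\sum_j f_j\partial_{x_j}: f_j\in S,\ \delta(\alpha_i)\in\alpha_i^{\mathbf{m}(H_i)}S\ \forall i\}$, viewed as an $S$-submodule of $S^l$ via $\delta\mapsto(f_1,\dots,f_l)^t$. Let $M(\mathcal{A},\mathbf{m})\subseteq S_\mathbb{Z}^n$ be the $S_\mathbb{Z}$-submodule generated by $\alpha_i^{\mathbf{m}(H_i)}e_i$, $i=1,\dots,n$ ($e_i$ the standard basis vectors), let $A(\mathcal{A})=(\partial\alpha_i/\partial x_j)_{i,j}$ (an $n\times l$ integer matrix), and let $\varphi_\mathbb{Z}\colon S_\mathbb{Z}^l\to S_\mathbb{Z}^n/M(\mathcal{A},\mathbf{m})$ be $(g_1,\dots,g_l)^t\mapsto A(\mathcal{A})(g_1,\dots,g_l)^t$ modulo $M(\mathcal{A},\mathbf{m})$. *)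

From HB Require Import structures.
From mathcomp Require Import all_boot all_order all_algebra.
From mathcomp Require Import mpoly.
Set Implicit Arguments. Unset Strict Implicit. Unset Printing Implicit Defensive.
Import Order.TTheory GRing.Theory Num.Theory.
Local Open Scope ring_scope.

(* S_Z = Z[x_1..x_l] is {mpoly int[l]},  S = Q[x_1..x_l] is {mpoly rat[l]}.
   The arrangement is given by its integer coefficient matrix
   A = A(cA) = (d alpha_i / d x_j) : 'M[int]_(n,l); alpha_i = sum_j A i j x_j. *)

Definition alphaR (R : comNzRingType) (n l : nat) (A : 'M[int]_(n, l)) (i : 'I_n)
  : {mpoly R[l]} :=
  \sum_(j < l) ((A i j)%:~R : R) *: 'X_j.

Definition Apoly (R : comNzRingType) (n l : nat) (A : 'M[int]_(n, l))
  : 'M[{mpoly R[l]}]_(n, l) :=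
  map_mx (fun z : int => ((z%:~R : R)%:MP)) A.

Definition no_prime_divides (n l : nat) (A : 'M[int]_(n, l)) : Prop :=
  forall (i : 'I_n) (p : nat), prime p -> ~ (forall j : 'I_l, (p%:Z %| A i j)%Z).

(* the hyperplanes H_i = ker alpha_i are pairwise distinct *)
Definition distinct_hyperplanes (n l : nat) (A : 'M[int]_(n, l)) : Prop :=
  forall i i' : 'I_n, i != i' ->
    ~ exists c : rat, forall j : 'I_l, ((A i j)%:~R : rat) = c * (A i' j)%:~R.

(* D(cA, m) as a subset of S^l : delta = (f_1,..,f_l)^t with
   delta(alpha_i) = sum_j f_j * dalpha_i/dx_j in alpha_i^(m H_i) S *)
Definition Dmod (n l : nat) (A : 'M[int]_(n, l)) (m : 'I_n -> nat)
  (delta : 'cV[{mpoly rat[l]}]_l) : Prop :=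
  forall i : 'I_n, exists h : {mpoly rat[l]},
    (Apoly rat A *m delta) i ord0 = (alphaR rat A i) ^+ (m i) * h.

Definition Mmod (n l : nat) (A : 'M[int]_(n, l)) (m : 'I_n -> nat)
  (v : 'cV[{mpoly int[l]}]_n) : Prop :=
  exists h : 'I_n -> {mpoly int[l]},
    v = \sum_(i < n) h i *: ((alphaR int A i) ^+ (m i) *: delta_mx i ord0).

(* Ker(phi_Z), phi_Z : S_Z^l -> S_Z^n / M, g |-> A g mod M *)
Definition ker_phiZ (n l : nat) (A : 'M[int]_(n, l)) (m : 'I_n -> nat)
  (g : 'cV[{mpoly int[l]}]_l) : Prop :=
  Mmod A m (Apoly int A *m g).

Definition embZQ (l : nat) (g : 'cV[{mpoly int[l]}]_l) : 'cV[{mpoly rat[l]}]_l :=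
  map_mx (map_mpoly (fun z : int => (z%:~R : rat))) g.

(* the image of Ker(phi_Z) (x)_Z Q in S_Z^l (x)_Z Q = S^l :
   the finite Q-linear combinations of elements of Ker(phi_Z) *)
Definition ker_tensorQ (n l : nat) (A : 'M[int]_(n, l)) (m : 'I_n -> nat)
  (delta : 'cV[{mpoly rat[l]}]_l) : Prop :=
  exists (k : nat) (c : 'I_k -> rat) (g : 'I_k -> 'cV[{mpoly int[l]}]_l),
    (forall t, ker_phiZ A m (g t)) /\
    delta = \sum_(t < k) (c t)%:MP *: embZQ (g t).

From HB Require Import structures.
From mathcomp Require Import all_boot all_order all_algebra.
From mathcomp Require Import mpoly.
Set Implicit Arguments. Unset Strict Implicit. Unset Printing Implicit Defensive.
Local Open Scope ring_scope.
Import GRing.Theory.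

(* Both M(A, m) and the defining condition of D(A, m) are diagonal: they ask
   that the i-th coordinate of A g be divisible by alpha_i^(m_i).  Hence D(A, m)
   is an S-module containing every vector of Ker(phi_Z), and conversely a
   common denominator N of the entries of delta and of the quotients
   delta(alpha_i) / alpha_i^(m_i) turns N delta into an element of Ker(phi_Z). *)

Section ClearDenominators.
Variable l : nat.
Local Notation intQ := (map_mpoly (n:=l) (fun z : int => (z%:~R : rat))).

Lemma intQ_inj : injective intQ.
Proof.
move=> p q E; apply/mpolyP => x; apply: (@intr_inj rat).
by rewrite -!mcoeff_map_mpoly E.
Qed.

Definition clears_denom (N : int) (p : {mpoly rat[l]}) : Prop :=
  exists q : {mpoly int[l]}, intQ q = N%:~R * p.

Lemma clears_denom0 N : clears_denom N 0.
Proof. by exists 0; rewrite rmorph0 mulr0. Qed.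

Lemma clears_denomD N p1 p2 :
  clears_denom N p1 -> clears_denom N p2 -> clears_denom N (p1 + p2).
Proof. by move=> [q1 E1] [q2 E2]; exists (q1 + q2); rewrite rmorphD /= E1 E2 mulrDr. Qed.

Lemma clears_denomMl M N p : clears_denom N p -> clears_denom (M * N) p.
Proof.
by move=> [q E]; exists (M%:~R * q); rewrite rmorphM /= rmorph_int E intrM mulrA.
Qed.

Lemma clears_denom_monomial (c : rat) (x : 'X_{1..l}) :
  clears_denom (denq c) (c *: 'X_[x]).
Proof.
exists (numq c *: 'X_[x]); rewrite map_mpolyZ map_mpolyX -!mul_mpolyC mulrA.
by rewrite -(rmorph_int (@mpolyC l rat)) -rmorphM /= [_ * c]mulrC -numqE.
Qed.

Lemma common_clears_denom (s : seq {mpoly rat[l]}) :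
  {in s, forall p, exists2 N : int, N != 0 & clears_denom N p} ->
  exists2 N : int, N != 0 & {in s, forall p, clears_denom N p}.
Proof.
elim: s => [_|p s IHs Hs]; first by exists 1.
have [Np Np0 HNp] := Hs p (mem_head p s).
have [|N N0 HN] := IHs; first by move=> q sq; apply: Hs; rewrite inE sq orbT.
exists (N * Np); first by rewrite mulf_neq0.
move=> q; rewrite inE => /predU1P [-> | /HN]; first exact: clears_denomMl.
by rewrite mulrC; apply: clears_denomMl.
Qed.

Lemma clears_denom_exists (p : {mpoly rat[l]}) :
  exists2 N : int, N != 0 & clears_denom N p.
Proof.
pose mons := [seq p@_x *: 'X_[x] | x <- msupp p].
have [|N N0 HN] := common_clears_denom (s := mons).
  move=> _ /mapP [x _ ->]; exists (denq p@_x); first exact: denq_neq0.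
  exact: clears_denom_monomial.
exists N => //; rewrite (mpolyE p) big_seq.
apply: (big_ind (clears_denom N)); [exact: clears_denom0 | exact: clears_denomD |].
by move=> x sx; apply: HN; apply: map_f.
Qed.

Lemma clears_denom_family (I : finType) (F : I -> {mpoly rat[l]}) :
  exists2 N : int, N != 0 & forall i, clears_denom N (F i).
Proof.
have [|N N0 HN] := common_clears_denom (s := [seq F i | i <- enum I]).
  by move=> _ /mapP [i _ ->]; apply: clears_denom_exists.
by exists N => // i; apply: HN; rewrite map_f ?mem_enum.
Qed.

Lemma intQ_alphaR n (A : 'M[int]_(n, l)) i : intQ (alphaR int A i) = alphaR rat A i.
Proof.
rewrite /alphaR rmorph_sum; apply: eq_bigr => j _ /=.
by rewrite map_mpolyZ map_mpolyX /= intz.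
Qed.

Lemma intQ_Apoly_mul n (A : 'M[int]_(n, l)) g i :
  intQ ((Apoly int A *m g) i ord0) = (Apoly rat A *m embZQ g) i ord0.
Proof.
rewrite !mxE rmorph_sum; apply: eq_bigr => j _.
by rewrite !mxE rmorphM /= map_mpolyC /= intz.
Qed.

End ClearDenominators.

Lemma sum_scale_delta_mx_coord (R : comNzRingType) n (h a : 'I_n -> R) i :
  (\sum_(i' < n) h i' *: (a i' *: delta_mx i' (ord0 : 'I_1))) i ord0 = h i * a i.
Proof.
rewrite summxE (bigD1 i) //= big1 ?addr0; first by rewrite !mxE !eqxx mulr1.
by move=> i' ne; rewrite !mxE eq_sym (negbTE ne) /= !mulr0.
Qed.

Section Multiarrangement.
Variables (n l : nat) (A : 'M[int]_(n, l)) (m : 'I_n -> nat).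
Local Notation intQ := (map_mpoly (n:=l) (fun z : int => (z%:~R : rat))).

Lemma MmodP v :
  Mmod A m v <-> forall i, exists h, v i ord0 = alphaR int A i ^+ m i * h.
Proof.
split=> [[h ->] i | /fin_all_exists [h Hh]].
  by exists (h i); rewrite sum_scale_delta_mx_coord mulrC.
exists h; apply/matrixP => i k; rewrite (ord1 k) {k}.
by rewrite sum_scale_delta_mx_coord Hh mulrC.
Qed.

Lemma Dmod_embZQ g : ker_phiZ A m g -> Dmod A m (embZQ g).
Proof.
move=> /MmodP Hg i; have [h Eh] := Hg i.
by exists (intQ h); rewrite -intQ_Apoly_mul Eh rmorphM rmorphXn /= intQ_alphaR.
Qed.

Lemma Dmod_lincomb k (c : 'I_k -> {mpoly rat[l]}) (d : 'I_k -> 'cV_l) :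
  (forall t, Dmod A m (d t)) -> Dmod A m (\sum_(t < k) c t *: d t).
Proof.
move=> Hd i; have /fin_all_exists [h Eh] := fun t => Hd t i.
exists (\sum_t c t * h t); rewrite mulmx_sumr summxE mulr_sumr.
by apply: eq_bigr => t _; rewrite -scalemxAr mxE Eh mulrCA.
Qed.

Lemma Dmod_int_multiple delta : Dmod A m delta ->
  exists2 c : rat, c != 0 & exists g, ker_phiZ A m g /\ embZQ g = c%:MP *: delta.
Proof.
move=> /fin_all_exists [h Eh].
pose F s := match s with inl j => delta j ord0 | inr i => h i end.
have [N N0 /fin_all_exists [q Eq]] := clears_denom_family F.
exists N%:~R; first by rewrite intr_eq0.
have NE : (N%:~R : {mpoly rat[l]}) = (N%:~R : rat)%:MP by rewrite rmorph_int.
exists (\col_j q (inl j)); split.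
  apply/MmodP => i; exists (q (inr i)); apply: intQ_inj.
  rewrite intQ_Apoly_mul rmorphM rmorphXn /= intQ_alphaR Eq /= mulrCA -Eh.
  rewrite !mxE mulr_sumr; apply: eq_bigr => j _.
  by rewrite !mxE Eq /= mulrCA.
by apply/matrixP => j k; rewrite (ord1 k) !mxE Eq NE.
Qed.

End Multiarrangement.

(* Ker(phi_Z) (x) Q is modelled as its image in S^l, which is faithful since Q
   is flat over Z. *)
Theorem lemma4p1 (n l : nat) (A : 'M[int]_(n, l)) (m : 'I_n -> nat) :
  no_prime_divides A -> distinct_hyperplanes A ->
  forall delta : 'cV[{mpoly rat[l]}]_l, Dmod A m delta <-> ker_tensorQ A m delta.
Proof.
move=> _ _ delta; split.
  move=> /Dmod_int_multiple [c c0 [g [kg Eg]]].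
  exists 1%N, (fun _ => c^-1), (fun _ => g); split => //.
  by rewrite big_ord1 Eg scalerA -rmorphM mulVf // scale1r.
move=> [k [c [g [kg ->]]]].
by apply: Dmod_lincomb => t; apply: Dmod_embZQ.
Qed.
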